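(* Let $A \in \mathbb{R}^{m\times n}$ and $W \in \mathbb{R}^{q\times m}$ be matrices, and let $B^\sharp\colon \mathbb{R}^m\to\mathbb{R}^n$ be a fixed measurable map. Let $X$ be a random vector in $\mathbb{R}^n$ and $\Xi, N$ random vectors in $\mathbb{R}^m$, all with finite second moments, such that the triples $(X,\Xi,N)$ and $(X,N,\Xi)$ have the same joint distribution (for instance, $\Xi$ and $N$ i.i.d. and independent of $X$). Set $Y = AX + \Xi$ and $Z = Y + N$. Let $\mathcal{F}$ be the set of measurable functions $f\colon\mathbb{R}^n\to\mathbb{R}^n$ with $\mathbb{E}\|WA[f(B^\sharp(Z))]\|_2^2<\infty$. Then $$\operatorname*{argmin}_{f\in\mathcal{F}} \mathbb{E}\,\big\|WA[f\circ B^\sharp(Z)] - WAX\big\|_2^2 \;=\; \operatorname*{argmin}_{f\in\mathcal{F}} \mathbb{E}\,\big\|WA[f\circ B^\sharp(Z)] - W(2Y-Z)\big\|_2^2 .$$ More precisely, for every $f\in\mathcal{F}$, $$\mathbb{E}\|WA[f\circ B^\sharp(Z)] - W(2Y-Z)\|_2^2 = \mathbb{E}\|WA[f\circ B^\sharp(Z)] - WAX\|_2^2 - \mathbb{E}\|WAX\|_2^2 + \mathbb{E}\|W(2Y-Z)\|_2^2 .$$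
   Context: Model: $Y = AX+\Xi$ is the noisy measurement of the unknown image $X$ under the linear forward operator $A$ with additive noise $\Xi$; $Z = Y+N$ is ''noisier'' data obtained by adding an independent copy-type noise $N$. $\|\cdot\|_2$ is the Euclidean norm. *)

(* Vectors of R^k are represented as
   k.-tuple R, which carries the product (= Borel) sigma-algebra of
   mathcomp-analysis (measure_tuple_display). *)
From HB Require Import structures.
From mathcomp Require Import all_boot all_order all_algebra.
From mathcomp Require Import all_classical all_reals all_analysis.
Set Implicit Arguments. Unset Strict Implicit. Unset Printing Implicit Defensive.
Import Order.TTheory GRing.Theory Num.Theory.
Local Open Scope ring_scope.

Section vecops.
Variable R : realType.

Definition tmv p k (M : 'M[R]_(p, k)) (x : k.-tuple R) : p.-tuple R :=
  [tuple \sum_(j < k) M i j * tnth x j | i < p].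

Definition tadd k (x y : k.-tuple R) : k.-tuple R :=
  [tuple tnth x i + tnth y i | i < k].

Definition tsub k (x y : k.-tuple R) : k.-tuple R :=
  [tuple tnth x i - tnth y i | i < k].

Definition sqnorm k (x : k.-tuple R) : R := \sum_(i < k) tnth x i ^+ 2.
End vecops.

From HB Require Import structures.
From mathcomp Require Import all_boot all_order all_algebra.
From mathcomp Require Import all_classical all_reals all_analysis.
From mathcomp Require Import measurable_realfun ring.

(* Expanding the squares, the two risks differ by a constant plus the cross
   terms 2 E<u, W Xi> and -2 E<u, W N>, where u = W A f(B# Z).  These cancel
   because Z = A X + Xi + N is symmetric in the two noises and the law of
   (X, Xi, N) is invariant under exchanging them.  To avoid integrability
   conditions on the cross terms, the exchange is applied to the nonnegative
   integrand |u + W Xi|^2 + |W N|^2, and the expansion is replaced by an exact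
   identity between sums of squared norms ([sqnorm_polarization]); the
   resulting identity of nonnegative integrals is then cancelled. *)
Set Implicit Arguments. Unset Strict Implicit. Unset Printing Implicit Defensive.
Import Order.TTheory GRing.Theory Num.Theory.
Local Open Scope classical_set_scope.
Local Open Scope ring_scope.

Section tuple_algebra.
Variable R : realType.

Lemma tnth_tmv p k (M : 'M[R]_(p, k)) x i :
  tnth (tmv M x) i = \sum_(j < k) M i j * tnth x j.
Proof. by rewrite tnth_mktuple. Qed.

Lemma tnth_tadd k (x y : k.-tuple R) i : tnth (tadd x y) i = tnth x i + tnth y i.
Proof. by rewrite tnth_mktuple. Qed.

Lemma tnth_tsub k (x y : k.-tuple R) i : tnth (tsub x y) i = tnth x i - tnth y i.
Proof. by rewrite tnth_mktuple. Qed.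

Lemma tmv_tadd p k (M : 'M[R]_(p, k)) x y :
  tmv M (tadd x y) = tadd (tmv M x) (tmv M y).
Proof.
apply: eq_from_tnth => i; rewrite !(tnth_tadd, tnth_tmv) -big_split /=.
by apply: eq_bigr => j _; rewrite tnth_tadd mulrDr.
Qed.

Lemma tmv_tsub p k (M : 'M[R]_(p, k)) x y :
  tmv M (tsub x y) = tsub (tmv M x) (tmv M y).
Proof.
apply: eq_from_tnth => i; rewrite !(tnth_tsub, tnth_tmv) -sumrB.
by apply: eq_bigr => j _; rewrite tnth_tsub mulrBr.
Qed.

Lemma tadd_AC k (a x y : k.-tuple R) : tadd (tadd a x) y = tadd (tadd a y) x.
Proof. by apply: eq_from_tnth => i; rewrite !tnth_tadd addrAC. Qed.

Lemma tsub_taddD k (y z : k.-tuple R) : tsub (tadd y y) (tadd y z) = tsub y z.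
Proof. by apply: eq_from_tnth => i; rewrite !(tnth_tsub, tnth_tadd); ring. Qed.

Lemma sqnorm_ge0 k (x : k.-tuple R) : 0 <= sqnorm x.
Proof. by apply: sumr_ge0 => i _; exact: sqr_ge0. Qed.

Lemma sqnorm_tadd_le k (x y : k.-tuple R) :
  sqnorm (tadd x y) <= 2 * (sqnorm x + sqnorm y).
Proof.
rewrite /sqnorm -big_split mulr_sumr /=; apply: ler_sum => i _.
rewrite tnth_tadd -subr_ge0.
have -> : 2 * (tnth x i ^+ 2 + tnth y i ^+ 2) - (tnth x i + tnth y i) ^+ 2
  = (tnth x i - tnth y i) ^+ 2 by ring.
exact: sqr_ge0.
Qed.

Lemma sqnorm_tsub_le k (x y : k.-tuple R) :
  sqnorm (tsub x y) <= 2 * (sqnorm x + sqnorm y).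
Proof.
rewrite /sqnorm -big_split mulr_sumr /=; apply: ler_sum => i _.
rewrite tnth_tsub -subr_ge0.
have -> : 2 * (tnth x i ^+ 2 + tnth y i ^+ 2) - (tnth x i - tnth y i) ^+ 2
  = (tnth x i + tnth y i) ^+ 2 by ring.
exact: sqr_ge0.
Qed.

(* Summing [(y i - y j)^2 >= 0] over all pairs [(i, j)]. *)
Lemma sqr_sum_le k (y : 'I_k -> R) :
  (\sum_(j < k) y j) ^+ 2 <= k%:R * \sum_(j < k) y j ^+ 2.
Proof.
have pairs : 2 * (\sum_(j < k) y j) ^+ 2 <=
    \sum_(i < k) \sum_(j < k) (y i ^+ 2 + y j ^+ 2).
  rewrite expr2 mulr_suml mulr_sumr; apply: ler_sum => i _.
  rewrite mulr_sumr mulr_sumr; apply: ler_sum => j _.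
  rewrite -subr_ge0.
  have -> : y i ^+ 2 + y j ^+ 2 - 2 * (y i * y j) = (y i - y j) ^+ 2 by ring.
  exact: sqr_ge0.
have double : \sum_(i < k) \sum_(j < k) (y i ^+ 2 + y j ^+ 2) =
    2 * (k%:R * \sum_(j < k) y j ^+ 2).
  under eq_bigr do rewrite big_split /= sumr_const card_ord.
  rewrite big_split /= sumrMnl sumr_const card_ord; ring.
by move: pairs; rewrite double ler_pM2l.
Qed.

Definition mx_sqbound p k (M : 'M[R]_(p, k)) : R :=
  (p * k)%:R * \sum_(i < p) \sum_(j < k) M i j ^+ 2.

Lemma mx_sqbound_ge0 p k (M : 'M[R]_(p, k)) : 0 <= mx_sqbound M.
Proof.
rewrite mulr_ge0 //; apply: sumr_ge0 => i _; apply: sumr_ge0 => j _.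
exact: sqr_ge0.
Qed.

Lemma sqnorm_tmv_le p k (M : 'M[R]_(p, k)) x :
  sqnorm (tmv M x) <= mx_sqbound M * sqnorm x.
Proof.
set S := \sum_(i < p) \sum_(j < k) M i j ^+ 2.
have entry_le i j : M i j ^+ 2 <= S.
  rewrite /S (bigD1 i) //= (bigD1 j) //= -addrA lerDl.
  apply: addr_ge0; first by apply: sumr_ge0 => *; exact: sqr_ge0.
  by apply: sumr_ge0 => *; apply: sumr_ge0 => *; exact: sqr_ge0.
have row_le i : (tnth (tmv M x) i) ^+ 2 <= k%:R * (S * sqnorm x).
  rewrite tnth_tmv; apply: le_trans (sqr_sum_le _) _.
  rewrite ler_wpM2l // /sqnorm mulr_sumr; apply: ler_sum => j _.
  by rewrite exprMn ler_wpM2r ?sqr_ge0.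
apply: le_trans (ler_sum _ (fun i _ => row_le i)) _.
rewrite sumr_const card_ord /mx_sqbound natrM -/S.
by rewrite le_eqVlt; apply/orP; left; apply/eqP; ring.
Qed.

Lemma sqnorm_polarization k (u a c c' : k.-tuple R) :
  sqnorm (tsub u (tsub (tadd a c) c')) + sqnorm a + (sqnorm (tadd u c) + sqnorm c')
  = sqnorm (tsub u a) + sqnorm (tsub (tadd a c) c') +
    (sqnorm (tadd u c') + sqnorm c).
Proof.
rewrite /sqnorm -!big_split /=; apply: eq_bigr => i _.
by rewrite !(tnth_tsub, tnth_tadd); ring.
Qed.

End tuple_algebra.

Section measurable_tuple.
Context (R : realType) (d : measure_display) (T : measurableType d).

Lemma measurable_tmv p k (M : 'M[R]_(p, k)) (g : T -> k.-tuple R) :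
  measurable_fun setT g -> measurable_fun setT (fun t => tmv M (g t)).
Proof.
move=> mg; apply/measurable_fun_tnthP => i /=.
rewrite /comp; under eq_fun do rewrite tnth_tmv.
apply: measurable_sum => j; apply: measurable_funM => //.
exact: measurableT_comp (measurable_tnth j) mg.
Qed.

Lemma measurable_tadd k (g h : T -> k.-tuple R) :
  measurable_fun setT g -> measurable_fun setT h ->
  measurable_fun setT (fun t => tadd (g t) (h t)).
Proof.
move=> mg mh; apply/measurable_fun_tnthP => i /=.
rewrite /comp; under eq_fun do rewrite tnth_tadd.
by apply: measurable_funD; exact: measurableT_comp (measurable_tnth i) _.
Qed.

Lemma measurable_tsub k (g h : T -> k.-tuple R) :
  measurable_fun setT g -> measurable_fun setT h ->
  measurable_fun setT (fun t => tsub (g t) (h t)).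
Proof.
move=> mg mh; apply/measurable_fun_tnthP => i /=.
rewrite /comp; under eq_fun do rewrite tnth_tsub.
by apply: measurable_funB; exact: measurableT_comp (measurable_tnth i) _.
Qed.

Lemma measurable_sqnorm k (g : T -> k.-tuple R) :
  measurable_fun setT g -> measurable_fun setT (fun t => sqnorm (g t)).
Proof.
move=> mg; apply: measurable_sum => j; apply: measurable_funX.
exact: measurableT_comp (measurable_tnth j) mg.
Qed.

End measurable_tuple.

Section ge0_integral.
Context (R : realType) (d : measure_display) (T : measurableType d).
Variable mu : {measure set T -> \bar R}.
Local Open Scope ereal_scope.

Lemma ge0_integralD_EFin (h1 h2 : T -> R) :
  measurable_fun setT h1 -> measurable_fun setT h2 ->
  (forall t, (0 <= h1 t)%R) -> (forall t, (0 <= h2 t)%R) ->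
  \int[mu]_t (h1 t + h2 t)%:E = \int[mu]_t (h1 t)%:E + \int[mu]_t (h2 t)%:E.
Proof.
move=> mh1 mh2 h10 h20; under eq_integral do rewrite EFinD.
apply: ge0_integralD => //.
- by move=> t _; rewrite lee_fin.
- exact/measurable_EFinP.
- by move=> t _; rewrite lee_fin.
- exact/measurable_EFinP.
Qed.

Section cancel.
Variables s1 s2 s3 r1 r2 r3 : T -> R.
Hypotheses (ms1 : measurable_fun setT s1) (ms2 : measurable_fun setT s2)
  (ms3 : measurable_fun setT s3) (mr1 : measurable_fun setT r1)
  (mr2 : measurable_fun setT r2) (mr3 : measurable_fun setT r3).
Hypotheses (s1_ge0 : forall t, (0 <= s1 t)%R) (s2_ge0 : forall t, (0 <= s2 t)%R)
  (s3_ge0 : forall t, (0 <= s3 t)%R) (r1_ge0 : forall t, (0 <= r1 t)%R)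
  (r2_ge0 : forall t, (0 <= r2 t)%R) (r3_ge0 : forall t, (0 <= r3 t)%R).

Lemma ge0_integral_cancel :
  (forall t, s1 t + s2 t + s3 t = r1 t + r2 t + r3 t)%R ->
  \int[mu]_t (s3 t)%:E = \int[mu]_t (r3 t)%:E ->
  \int[mu]_t (s3 t)%:E \is a fin_num ->
  \int[mu]_t (s1 t)%:E + \int[mu]_t (s2 t)%:E =
  \int[mu]_t (r1 t)%:E + \int[mu]_t (r2 t)%:E.
Proof.
move=> sr s3r3 s3_fin.
have : \int[mu]_t (s1 t + s2 t + s3 t)%:E = \int[mu]_t (r1 t + r2 t + r3 t)%:E.
  by apply: eq_integral => t _; rewrite sr.
have s12_ge0 t : (0 <= s1 t + s2 t)%R by rewrite addr_ge0.
have r12_ge0 t : (0 <= r1 t + r2 t)%R by rewrite addr_ge0.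
rewrite !ge0_integralD_EFin //; try exact: measurable_funD.
have r3_fin : \int[mu]_t (r3 t)%:E \is a fin_num by rewrite -s3r3.
by rewrite s3r3 => e; rewrite -[LHS](addeK _ r3_fin) e addeK.
Qed.

End cancel.
End ge0_integral.

Lemma ge0_integral_comp_same_law (R : realType) (d dV : measure_display)
    (T : measurableType d) (V : measurableType dV)
    (mu : {measure set T -> \bar R}) (phi1 phi2 : T -> V) (H : V -> R) :
  measurable_fun setT phi1 -> measurable_fun setT phi2 ->
  (forall S, measurable S -> mu (phi1 @^-1` S) = mu (phi2 @^-1` S)) ->
  measurable_fun setT H -> (forall v, 0 <= H v) ->
  (\int[mu]_t (H (phi1 t))%:E = \int[mu]_t (H (phi2 t))%:E)%E.
Proof.
move=> mphi1 mphi2 same_law mH H_ge0.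
have mEH : measurable_fun setT (fun v => (H v)%:E) by exact/measurable_EFinP.
have EH_ge0 : {in setT, forall v, (0 <= (H v)%:E)%E} by move=> v _; rewrite lee_fin.
have := ge0_integral_pushforward mphi1 mu measurableT mEH EH_ge0.
have := ge0_integral_pushforward mphi2 mu measurableT mEH EH_ge0.
rewrite !preimage_setT => <- <-.
by apply: eq_measure_integral => S mS _; exact: same_law.
Qed.

Section square_integrable.
Context (R : realType) (d : measure_display) (T : measurableType d).
Variable mu : {measure set T -> \bar R}.

Definition square_integrable k (g : T -> k.-tuple R) :=
  mu.-integrable setT (fun t => (sqnorm (g t))%:E).

Lemma square_integrableP k (g : T -> k.-tuple R) : measurable_fun setT g ->
  square_integrable g <-> (\int[mu]_t (sqnorm (g t))%:E < +oo)%E.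
Proof.
move=> mg; have int_abs : (\int[mu]_t `|(sqnorm (g t))%:E| =
    \int[mu]_t (sqnorm (g t))%:E)%E.
  by apply: eq_integral => t _; rewrite abse_EFin ger0_norm ?sqnorm_ge0.
split => [/integrableP[_]|fin_g]; first by rewrite int_abs.
apply/integrableP; split; first exact/measurable_EFinP/measurable_sqnorm.
by rewrite int_abs.
Qed.

Lemma square_integrable_le p k l (v : T -> p.-tuple R) (g : T -> k.-tuple R)
    (h : T -> l.-tuple R) (c : R) :
  measurable_fun setT v ->
  (forall t, sqnorm (v t) <= c * (sqnorm (g t) + sqnorm (h t))) ->
  square_integrable g -> square_integrable h -> square_integrable v.
Proof.
move=> mv v_le ig ih.
have ic := integrableZl measurableT c (integrableD measurableT ig ih).
apply: (le_integrable measurableT _ _ ic).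
  exact/measurable_EFinP/measurable_sqnorm.
move=> t _ /=; rewrite lee_fin ger0_norm ?sqnorm_ge0 //.
exact: le_trans (v_le t) (ler_norm _).
Qed.

Lemma square_integrable_tmv p k (M : 'M[R]_(p, k)) (g : T -> k.-tuple R) :
  measurable_fun setT g -> square_integrable g ->
  square_integrable (fun t => tmv M (g t)).
Proof.
move=> mg ig; apply: (@square_integrable_le _ _ _ _ g g (mx_sqbound M)) => //.
  exact: measurable_tmv.
move=> t; apply: le_trans (sqnorm_tmv_le M (g t)) _.
by rewrite ler_wpM2l ?mx_sqbound_ge0 // lerDl sqnorm_ge0.
Qed.

Lemma square_integrable_tadd k (g h : T -> k.-tuple R) :
  measurable_fun setT g -> measurable_fun setT h ->
  square_integrable g -> square_integrable h ->
  square_integrable (fun t => tadd (g t) (h t)).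
Proof.
move=> mg mh; apply: square_integrable_le; first exact: measurable_tadd.
by move=> t; exact: sqnorm_tadd_le.
Qed.

Lemma square_integrable_tsub k (g h : T -> k.-tuple R) :
  measurable_fun setT g -> measurable_fun setT h ->
  square_integrable g -> square_integrable h ->
  square_integrable (fun t => tsub (g t) (h t)).
Proof.
move=> mg mh; apply: square_integrable_le; first exact: measurable_tsub.
by move=> t; exact: sqnorm_tsub_le.
Qed.

Lemma square_integrable_fin_num k (g : T -> k.-tuple R) :
  square_integrable g -> (\int[mu]_t (sqnorm (g t))%:E)%E \is a fin_num.
Proof. exact: integrable_fin_num. Qed.

Lemma square_integrable_sqnormD_fin_num k l (g : T -> k.-tuple R)
    (h : T -> l.-tuple R) :
  measurable_fun setT g -> measurable_fun setT h ->
  square_integrable g -> square_integrable h ->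
  (\int[mu]_t (sqnorm (g t) + sqnorm (h t))%:E)%E \is a fin_num.
Proof.
move=> mg mh ig ih; rewrite ge0_integralD_EFin; last 2 first.
- by move=> t; exact: sqnorm_ge0.
- by move=> t; exact: sqnorm_ge0.
- by rewrite fin_numD !square_integrable_fin_num.
- exact: measurable_sqnorm.
- exact: measurable_sqnorm.
Qed.

End square_integrable.

Section noisier2noise.
Context (R : realType) (d : measure_display) (T : measurableType d).
Variable P : probability T R.
Variables (m n q : nat) (A : 'M[R]_(m, n)) (W : 'M[R]_(q, m)).
Variables (X : T -> n.-tuple R) (Xi N : T -> m.-tuple R).
Hypotheses (mX : measurable_fun setT X) (mXi : measurable_fun setT Xi)
  (mN : measurable_fun setT N).

Local Notation Y t := (tadd (tmv A (X t)) (Xi t)).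
Local Notation Z t := (tadd (Y t) (N t)).

Let mY : measurable_fun setT (fun t => Y t).
Proof. by apply: measurable_tadd => //; exact: measurable_tmv. Qed.

Let mZ : measurable_fun setT (fun t => Z t).
Proof. exact: measurable_tadd. Qed.

Let mWAX : measurable_fun setT (fun t => tmv W (tmv A (X t))).
Proof. by do 2 apply: measurable_tmv. Qed.

Let mWtarget :
  measurable_fun setT (fun t => tmv W (tsub (tadd (Y t) (Y t)) (Z t))).
Proof.
by apply: measurable_tmv; apply: measurable_tsub => //; exact: measurable_tadd.
Qed.

Hypotheses (X2 : (\int[P]_t (sqnorm (X t))%:E < +oo)%E)
  (Xi2 : (\int[P]_t (sqnorm (Xi t))%:E < +oo)%E)
  (N2 : (\int[P]_t (sqnorm (N t))%:E < +oo)%E).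

Let iX : square_integrable P X. Proof. exact/square_integrableP. Qed.
Let iXi : square_integrable P Xi. Proof. exact/square_integrableP. Qed.
Let iN : square_integrable P N. Proof. exact/square_integrableP. Qed.

Lemma square_integrable_signal :
  square_integrable P (fun t => tmv W (tmv A (X t))).
Proof.
apply: square_integrable_tmv; first exact: measurable_tmv.
exact: square_integrable_tmv.
Qed.

Lemma square_integrable_noisier_target :
  square_integrable P (fun t => tmv W (tsub (tadd (Y t) (Y t)) (Z t))).
Proof.
under [X in square_integrable P X]eq_fun do rewrite tsub_taddD.
apply: square_integrable_tmv; first exact: measurable_tsub.
apply: square_integrable_tsub => //; apply: square_integrable_tadd => //.
  exact: measurable_tmv.
exact: square_integrable_tmv.
Qed.

Hypothesis exch : forall S : set ((n.-tuple R * m.-tuple R) * m.-tuple R),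
  measurable S ->
  P ((fun t => (X t, Xi t, N t)) @^-1` S) = P ((fun t => (X t, N t, Xi t)) @^-1` S).

(* [Z = A X + Xi + N] is symmetric in the two noises. *)
Lemma integral_exchange_noises (g : m.-tuple R -> q.-tuple R) :
  measurable_fun setT g ->
  (\int[P]_t (sqnorm (tadd (g (Z t)) (tmv W (Xi t))) + sqnorm (tmv W (N t)))%:E =
   \int[P]_t (sqnorm (tadd (g (Z t)) (tmv W (N t))) + sqnorm (tmv W (Xi t)))%:E)%E.
Proof.
move=> mg.
pose H (p : (n.-tuple R * m.-tuple R) * m.-tuple R) :=
  sqnorm (tadd (g (tadd (tadd (tmv A p.1.1) p.1.2) p.2)) (tmv W p.1.2)) +
  sqnorm (tmv W p.2).
have mH : measurable_fun setT H.
  have mp11 : measurable_fun setT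
      (fun p : (n.-tuple R * m.-tuple R) * m.-tuple R => p.1.1).
    exact: (measurableT_comp (f := fst) (g := fst)).
  have mp12 : measurable_fun setT
      (fun p : (n.-tuple R * m.-tuple R) * m.-tuple R => p.1.2).
    exact: (measurableT_comp (f := snd) (g := fst)).
  have mp2 : measurable_fun setT
      (fun p : (n.-tuple R * m.-tuple R) * m.-tuple R => p.2).
    exact: measurable_snd.
  apply: measurable_funD; apply: measurable_sqnorm; last exact: measurable_tmv.
  apply: measurable_tadd; last exact: measurable_tmv.
  apply: measurableT_comp mg _.
  by do 2 apply: measurable_tadd => //; exact: measurable_tmv.
transitivity (\int[P]_t (H (X t, N t, Xi t))%:E)%E.
  apply: ge0_integral_comp_same_law exch mH _.
  - by apply: measurable_fun_pair => //; exact: measurable_fun_pair.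
  - by apply: measurable_fun_pair => //; exact: measurable_fun_pair.
  - by move=> p; rewrite addr_ge0 ?sqnorm_ge0.
by apply: eq_integral => t _; rewrite /H /= tadd_AC.
Qed.

Lemma noisier2noise_risk (g : m.-tuple R -> n.-tuple R) :
  measurable_fun setT g ->
  (\int[P]_t (sqnorm (tmv W (tmv A (g (Z t)))))%:E < +oo)%E ->
  (\int[P]_t (sqnorm (tsub (tmv W (tmv A (g (Z t))))
                           (tmv W (tsub (tadd (Y t) (Y t)) (Z t)))))%:E =
   \int[P]_t (sqnorm (tsub (tmv W (tmv A (g (Z t)))) (tmv W (tmv A (X t)))))%:E
   - \int[P]_t (sqnorm (tmv W (tmv A (X t))))%:E
   + \int[P]_t (sqnorm (tmv W (tsub (tadd (Y t) (Y t)) (Z t))))%:E)%E.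
Proof.
move=> mg ig.
pose u t := tmv W (tmv A (g (Z t))).
pose a t := tmv W (tmv A (X t)).
pose b t := tmv W (tsub (tadd (Y t) (Y t)) (Z t)).
have mu : measurable_fun setT u.
  by do 2 apply: measurable_tmv; exact: measurableT_comp mg mZ.
have {}iu : square_integrable P u by exact/square_integrableP.
have mWXi : measurable_fun setT (fun t => tmv W (Xi t)) by exact: measurable_tmv.
have mWN : measurable_fun setT (fun t => tmv W (N t)) by exact: measurable_tmv.
suff sum : (\int[P]_t (sqnorm (tsub (u t) (b t)))%:E + \int[P]_t (sqnorm (a t))%:E =
            \int[P]_t (sqnorm (tsub (u t) (a t)))%:E + \int[P]_t (sqnorm (b t))%:E)%E.
  by rewrite -[LHS](addeK _ (square_integrable_fin_num square_integrable_signal))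
    sum addeAC.
pose s3 t := sqnorm (tadd (u t) (tmv W (Xi t))) + sqnorm (tmv W (N t)).
pose r3 t := sqnorm (tadd (u t) (tmv W (N t))) + sqnorm (tmv W (Xi t)).
have ms3 : measurable_fun setT s3.
  by apply: measurable_funD; apply: measurable_sqnorm => //; exact: measurable_tadd.
have mr3 : measurable_fun setT r3.
  by apply: measurable_funD; apply: measurable_sqnorm => //; exact: measurable_tadd.
apply: (@ge0_integral_cancel _ _ _ _ _ _ s3 _ _ r3) => //.
1-4: by apply: measurable_sqnorm => //; exact: measurable_tsub.
1-6: by move=> t; rewrite /s3 /r3 ?addr_ge0 ?sqnorm_ge0.
- move=> t; rewrite /b tsub_taddD tmv_tsub tmv_tadd.
  exact: sqnorm_polarization.
- apply: integral_exchange_noises (fun z => tmv W (tmv A (g z))) _.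
  by do 2 apply: measurable_tmv.
- apply: square_integrable_sqnormD_fin_num => //; first exact: measurable_tadd.
    by apply: square_integrable_tadd => //; exact: square_integrable_tmv.
  exact: square_integrable_tmv.
Qed.

End noisier2noise.

Lemma argmin_shift (U : Type) (R : realDomainType) (F : set U)
    (L1 L2 : U -> \bar R) (c : \bar R) :
  c \is a fin_num -> (forall f, F f -> L2 f = L1 f + c)%E ->
  [set f | F f /\ forall g, F g -> (L1 f <= L1 g)%E] =
  [set f | F f /\ forall g, F g -> (L2 f <= L2 g)%E].
Proof.
move=> c_fin L2E.
have le_shift f g : F f -> F g -> (L2 f <= L2 g)%E = (L1 f <= L1 g)%E.
  by move=> Ff Fg; rewrite !L2E // leeD2rE.
apply/seteqP; split => f [Ff f_min]; split => // g Fg.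
  by rewrite le_shift //; exact: f_min.
by rewrite -le_shift //; exact: f_min.
Qed.

Theorem theorem1 (R : realType) (d : measure_display) (T : measurableType d)
  (P : probability T R) (m n q : nat)
  (A : 'M[R]_(m, n)) (W : 'M[R]_(q, m))
  (Bs : m.-tuple R -> n.-tuple R) (mBs : measurable_fun setT Bs)
  (X : T -> n.-tuple R) (Xi N : T -> m.-tuple R)
  (mX : measurable_fun setT X) (mXi : measurable_fun setT Xi)
  (mN : measurable_fun setT N)
  (X2 : (\int[P]_t (sqnorm (X t))%:E < +oo)%E)
  (Xi2 : (\int[P]_t (sqnorm (Xi t))%:E < +oo)%E)
  (N2 : (\int[P]_t (sqnorm (N t))%:E < +oo)%E)
  (exch : forall S : set ((n.-tuple R * m.-tuple R) * m.-tuple R),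
     measurable S ->
     P ((fun t => (X t, Xi t, N t)) @^-1` S) =
     P ((fun t => (X t, N t, Xi t)) @^-1` S)) :
  let Y := fun t => tadd (tmv A (X t)) (Xi t) in
  let Z := fun t => tadd (Y t) (N t) in
  let F := [set f : n.-tuple R -> n.-tuple R | measurable_fun setT f /\
             (\int[P]_t (sqnorm (tmv W (tmv A (f (Bs (Z t))))))%:E < +oo)%E] in
  let L1 := fun f : n.-tuple R -> n.-tuple R =>
    (\int[P]_t (sqnorm (tsub (tmv W (tmv A (f (Bs (Z t)))))
                             (tmv W (tmv A (X t)))))%:E)%E in
  let L2 := fun f : n.-tuple R -> n.-tuple R =>
    (\int[P]_t (sqnorm (tsub (tmv W (tmv A (f (Bs (Z t)))))
                             (tmv W (tsub (tadd (Y t) (Y t)) (Z t)))))%:E)%E in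
  [set f | F f /\ forall g, F g -> (L1 f <= L1 g)%E] =
  [set f | F f /\ forall g, F g -> (L2 f <= L2 g)%E] /\
  forall f, F f ->
    L2 f = (L1 f - \int[P]_t (sqnorm (tmv W (tmv A (X t))))%:E
            + \int[P]_t (sqnorm (tmv W (tsub (tadd (Y t) (Y t)) (Z t))))%:E)%E.
Proof.
move=> Y Z F L1 L2.
pose c := ((- \int[P]_t (sqnorm (tmv W (tmv A (X t))))%:E)
           + \int[P]_t (sqnorm (tmv W (tsub (tadd (Y t) (Y t)) (Z t))))%:E)%E.
have c_fin : c \is a fin_num.
  have signal := square_integrable_signal A W mX X2.
  have target := square_integrable_noisier_target A W mX mXi mN X2 Xi2 N2.
  by rewrite /c fin_numD fin_numN (square_integrable_fin_num signal)
    (square_integrable_fin_num target).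
have risk f : F f -> L2 f = (L1 f + c)%E.
  move=> [mf uf]; rewrite addeA.
  exact: noisier2noise_risk mX mXi mN X2 Xi2 N2 exch _ (measurableT_comp mf mBs) uf.
split; first exact: argmin_shift c_fin risk.
by move=> f Ff; rewrite risk // addeA.
Qed.
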